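(* In the Jolteon protocol described in the context, if an honest replica successfully performs the Commit step on block $B$, then $B$ is globally direct-committed.
   Context: Jolteon protocol. There are $n=3f+1$ replicas, at most $f$ Byzantine, the rest honest; reliable authenticated channels; ideal threshold signatures in which $2f+1$ shares on the same message from distinct replicas combine into a threshold signature. A block is $B=(id,qc,tc,r,v,txn)$, with $qc$ a quorum certificate of its parent, $tc$ a timeout certificate or $\bot$, round $r$, view $v=0$, transactions $txn$, and $id$ a collision-resistant hash of the contents. A quorum certificate (QC) for $B$ is a threshold signature on $(B.id,B.r,B.v)$ from $2f+1$ shares (votes); $qc.r=B.r$; $B$ is certified if a QC for it exists; a genesis block of round $0$ has a QC. QCs are compared by round. A timeout message for round $r$ is a share on $r$ with the sender's $qc_{high}$; a timeout certificate (TC) for round $r$ is a threshold signature on $r$ from $2f+1$ timeout messages together with their $2f+1$ $qc_{high}$'s (all of round $<r$). Each round $r$ has a leader $L_r$ (round robin). Each replica keeps $r_{vote}=0$, $r_{cur}=1$, $qc_{high}$ = genesis QC. Propose: upon entering round $r$, $L_r$ multicasts $B=(id,qc_{high},tc,r,0,txn)$, with $tc$ the round-$(r-1)$ TC if $L_r$ entered round $r$ by receiving it, else $\bot$. Vote: upon the first valid proposal $B=(id,qc,tc,r,v,txn)$ from $L_r$, execute Advance Round, Lock, Commit; then if $r=r_{cur}$, $v=v_{cur}=0$, $r>r_{vote}$, and either $r=qc.r+1$ or ($r=tc.r+1$ and $qc.r\ge\max\{q.r: q$ a $qc_{high}$ in $tc\}$), send a share on $(id,r,v)$ to $L_{r+1}$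 and set $r_{vote}\gets r$. Lock: upon seeing a valid QC $qc$ (formed from votes or contained in a proposal, timeout message or TC), set $qc_{high}\gets\max(qc_{high},qc)$. Commit: whenever there are two certified blocks $B,B'$ with $B'.qc$ certifying $B$ and $B'.r=B.r+1$, commit $B$ and all its ancestors. Advance Round: set $r_{cur}\gets\max(r_{cur},r)$ upon receiving or forming a round-$(r-1)$ QC or TC. Timer: upon entering round $r$, send the round-$(r-1)$ TC to $L_r$ if held and reset a timer; on expiry stop voting in round $r_{cur}$ and multicast a timeout message; upon a valid timeout message or TC execute Advance Round, Lock, Commit; upon $2f+1$ timeout messages form a TC. Definition: a block $B$ is globally direct-committed if $f+1$ honest replicas each successfully perform the Vote step on a proposal of a block $B'$ in round $B.r+1$ such that $B'.qc$ certifies $B$ (these Vote calls invoke Lock, setting $qc_{high}\gets B'.qc$, and produce $f+1$ matching votes). *)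

From mathcomp Require Import all_boot.
Set Implicit Arguments. Unset Strict Implicit. Unset Printing Implicit Defensive.

(* A quorum certificate, in the ideal threshold-signature model, is identified
   with the message (id, r, v) it signs; its validity is [valid_qc] below. *)
Record qc := QC { qc_id : nat; qc_r : nat; qc_v : nat }.

(* A timeout certificate: round r together with the 2f+1 carried qc_high's. *)
Record tc := TC { tc_r : nat; tc_highs : seq qc }.

(* A block B = (id, qc, tc, r, v, txn); the id is not stored but computed as
   [hash B] for a collision-resistant (ideal: injective) hash. *)
Record block := Block {
  b_qc : qc; b_tc : option tc; b_r : nat; b_v : nat; b_txn : seq nat }.

Definition vote_msg (hash : block -> nat) (B : block) : qc :=
  QC (hash B) (b_r B) (b_v B).

Definition certifies (hash : block -> nat) (q : qc) (B : block) : Prop :=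
  q = vote_msg hash B.

(* An execution of the protocol among replicas 'I_n, abstracted by:
   - [share i m]     : replica i produced a vote share on message m = (id,r,v)
                       at some point of the execution;
   - [vote_step i B] : replica i successfully performed the Vote step on a
                       proposal of block B (thereby sending its share). *)
Record execution (n : nat) := Execution {
  share : 'I_n -> qc -> Prop;
  vote_step : 'I_n -> block -> Prop }.

(* Protocol behaviour of honest replicas relevant to vote shares:
   an honest replica signs a vote share only in the Vote step, on the
   (id, r, v) of the proposed block; and every successful Vote step produces
   that share. (Byzantine replicas may sign arbitrary shares.) *)
Definition wf_exec n (hash : block -> nat) (honest : {set 'I_n})
    (E : execution n) : Prop :=
  (forall i, i \in honest -> forall m, share E i m ->
      exists B, vote_step E i B /\ m = vote_msg hash B) /\
  (forall i B, vote_step E i B -> share E i (vote_msg hash B)).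

(* Ideal threshold signatures: a valid QC on m exists iff 2f+1 distinct
   replicas produced shares on m. *)
Definition valid_qc n (f : nat) (E : execution n) (m : qc) : Prop :=
  exists S : {set 'I_n}, 2 * f + 1 <= #|S| /\ (forall j, j \in S -> share E j m).

(* B is certified: a QC for B exists (the genesis block has a QC). *)
Definition certified n (f : nat) (hash : block -> nat) (genesis : block)
    (E : execution n) (B : block) : Prop :=
  B = genesis \/ valid_qc f E (vote_msg hash B).

Definition commit_step n (f : nat) (hash : block -> nat) (genesis : block)
    (honest : {set 'I_n}) (E : execution n) (i : 'I_n) (B : block) : Prop :=
  i \in honest /\
  exists B' : block,
    [/\ certified f hash genesis E B, certified f hash genesis E B',
        certifies hash (b_qc B') B & b_r B' = b_r B + 1].

Definition globally_direct_committed n (f : nat) (hash : block -> nat)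
    (honest : {set 'I_n}) (E : execution n) (B : block) : Prop :=
  exists B' : block,
    [/\ b_r B' = b_r B + 1, certifies hash (b_qc B') B &
        exists S : {set 'I_n},
          [/\ f + 1 <= #|S|, S \subset honest &
              forall j, j \in S -> vote_step E j B']].

From mathcomp Require Import all_boot.
From mathcomp Require Import zify.

(* The block B' witnessing the commit of B has round B.r + 1 > 0, so it is
   not the genesis block and its certificate is a genuine QC: 2f+1 replicas
   signed B'.id.  At most f of them are Byzantine, so f+1 honest replicas
   signed it; an honest replica signs only in the Vote step, on the id of the
   proposed block, and by collision resistance that block is B' itself. *)

Lemma card_quorum_setI (T : finType) (A S : {set T}) (f k : nat) :
  #|~: A| <= f -> k + f <= #|S| -> k <= #|S :&: A|.
Proof.
move=> hA hS.
have hSA : #|S :\: A| <= #|~: A| by rewrite subset_leq_card // setDE subsetIr.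
have := cardsID A S; lia.
Qed.

Lemma vote_msg_inj (hash : block -> nat) :
  injective hash -> injective (vote_msg hash).
Proof. by move=> hash_inj B1 B2 [/hash_inj]. Qed.

Section HonestVotes.

Variables (n f : nat) (hash : block -> nat) (honest : {set 'I_n}).
Variable E : execution n.
Hypothesis hash_inj : injective hash.
Hypothesis wfE : wf_exec hash honest E.

Lemma honest_share_vote_step j B :
  j \in honest -> share E j (vote_msg hash B) -> vote_step E j B.
Proof.
move=> hj /(wfE.1 j hj) [B' [hvote /vote_msg_inj eqB]].
by rewrite (eqB hash_inj).
Qed.

Lemma valid_qc_honest_voters B :
  #|~: honest| <= f -> valid_qc f E (vote_msg hash B) ->
  exists S : {set 'I_n},
    [/\ f + 1 <= #|S|, S \subset honest & forall j, j \in S -> vote_step E j B].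
Proof.
move=> hbyz [Q [hQ hshare]].
exists (Q :&: honest); split; first by apply: card_quorum_setI hbyz _; lia.
  exact: subsetIr.
move=> j /setIP [jQ jh].
exact: honest_share_vote_step jh (hshare j jQ).
Qed.

End HonestVotes.

Lemma certified_valid_qc n f hash genesis (E : execution n) B :
  b_r genesis = 0 -> 0 < b_r B ->
  certified f hash genesis E B -> valid_qc f E (vote_msg hash B).
Proof. by move=> hg hB [eB | //]; rewrite eB hg in hB. Qed.

Theorem lemma1 (f : nat) (hash : block -> nat) (genesis : block)
    (honest : {set 'I_(3 * f + 1)}) (E : execution (3 * f + 1))
    (i : 'I_(3 * f + 1)) (B : block) :
  injective hash ->
  b_r genesis = 0 ->
  #|~: honest| <= f ->
  wf_exec hash honest E ->
  commit_step f hash genesis honest E i B ->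
  globally_direct_committed f hash honest E B.
Proof.
move=> hash_inj hgen hbyz wfE [_ [B' [_ certB' hcert hr]]].
exists B'; split => //.
have qcB' : valid_qc f E (vote_msg hash B').
  by apply: certified_valid_qc hgen _ certB'; rewrite hr addn1.
exact: valid_qc_honest_voters hash_inj wfE _ hbyz qcB'.
Qed.
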